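(* Let $\mathcal{A}$ be a pOC with state set $Q$ whose underlying chain $\mathcal{X}$ is strongly connected, with trend $t>0$, and assume $[p{\downarrow}]>0$ for all $p\in Q$. Let $v$ be a potential, $|v|=v_{\max}-v_{\min}$, and let $p\in Q$ satisfy $v_p=v_{\max}$. Then $$[p{\uparrow}]\ge\frac{t^3}{12(2|v|+4)^3}.$$
   Context: A pOC is $\mathcal{A}=(Q,\delta^{=0},\delta^{>0},P^{=0},P^{>0})$ with the following components. - $\delta^{>0}\subseteq Q\times\{-1,0,1\}\times Q$ are the positive rules and $\delta^{=0}\subseteq Q\times\{0,1\}\times Q$ are the zero rules. Every state has both kinds of outgoing rule. - $P^{>0}$ and $P^{=0}$ are positive probability distributions over the outgoing rules of each state. $\mathcal{M}_\mathcal{A}$ is the Markov chain on configurations $p(i)$ with the following transitions: - $p(0)\to q(c)$ with probability $P^{=0}(p,c,q)$; - for $i\ge1$, $p(i)\to q(i+c)$ with probability $P^{>0}(p,c,q)$. $[p{\uparrow}]$ is the probability that a run from $p(1)$ never reaches counter value zero, and $[p{\downarrow}]=1-[p{\uparrow}]$. $\mathcal{X}$ is the finite Markov chain on $Q$ with transition matrix $A_{pq}=\sum_cP^{>0}(p,c,q)$. With $\alpha$ its invariant distribution and $s_p=\sum_{(p,c,q)\in\delta^{>0}}P^{>0}(p,c,q)c$, the trend is $t=\alpha s$. A potential is $v\in\mathbb{R}^Q$ with $s+Av=v+\mathbf{1}t$. $v_{\max}$ and $v_{\min}$ are its largest and smallest components. *)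

From HB Require Import structures.
From mathcomp Require Import all_boot all_order all_algebra.
From mathcomp Require Import boolp classical_sets reals.
Set Implicit Arguments. Unset Strict Implicit. Unset Printing Implicit Defensive.
Import Order.TTheory GRing.Theory Num.Theory.
Local Open Scope ring_scope.

(* Counter updates c in {-1,0,1} are encoded by k : 'I_3 with c = k - 1. *)
Definition upd (k : 'I_3) : int := (k%:Z - 1)%R.

(* A probabilistic one-counter automaton over the finite state set Q.
   Ppos p k q = P^{>0}(p, upd k, q)  (0 if the rule is absent),
   Pzero p k q = P^{=0}(p, upd k, q) (zero rules have c in {0,1}). *)
Record pOC (R : realType) (Q : finType) := POC {
  Ppos : Q -> 'I_3 -> Q -> R;
  Pzero : Q -> 'I_3 -> Q -> R;
  Ppos_ge0 : forall p k q, 0 <= Ppos p k q;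
  Pzero_ge0 : forall p k q, 0 <= Pzero p k q;
  Ppos_sum1 : forall p, \sum_(k : 'I_3) \sum_(q : Q) Ppos p k q = 1;
  Pzero_sum1 : forall p, \sum_(k : 'I_3) \sum_(q : Q) Pzero p k q = 1;
  Pzero_nodec : forall p q, Pzero p ord0 q = 0
}.

Section Defs.
Variables (R : realType) (Q : finType) (A : pOC R Q).

(* Probability, in M_A, that a run from p(i) with i >= 1 visits counter value 0
   within n steps (for i = 0 it is 1).  Only positive rules are used before
   the first visit to 0. *)
Fixpoint hit (n : nat) (p : Q) (i : nat) : R :=
  if i == 0%N then 1 else
  match n with
  | 0%N => 0
  | n'.+1 => \sum_(k : 'I_3) \sum_(q : Q) Ppos A p k q * hit n' q (i + k - 1)%N
  end.

(* [p down]: probability that a run from p(1) ever reaches counter value 0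
   (the supremum of the nondecreasing sequence of finite-horizon probabilities). *)
Definition pdown (p : Q) : R := sup (range (fun n => hit n p 1%N)).
Definition pup (p : Q) : R := 1 - pdown p.

Definition Amat (p q : Q) : R := \sum_(k : 'I_3) Ppos A p k q.
Definition sdrift (p : Q) : R :=
  \sum_(k : 'I_3) \sum_(q : Q) Ppos A p k q * (upd k)%:~R.

Definition strongly_connected : Prop :=
  forall p q, connect (fun x y => 0 < Amat x y) p q.

Definition invariant_distribution (alpha : Q -> R) : Prop :=
  (forall p, 0 <= alpha p) /\ \sum_p alpha p = 1 /\
  (forall q, \sum_p alpha p * Amat p q = alpha q).

Definition trend (alpha : Q -> R) : R := \sum_p alpha p * sdrift p.

Definition potential (t : R) (v : Q -> R) : Prop :=
  forall p, sdrift p + \sum_q Amat p q * v q = v p + t.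

End Defs.

Definition vmax (R : realType) (Q : finType) (x0 : Q) (v : Q -> R) : R :=
  \big[Num.max/v x0]_(q : Q) v q.
Definition vmin (R : realType) (Q : finType) (x0 : Q) (v : Q -> R) : R :=
  \big[Num.min/v x0]_(q : Q) v q.

From HB Require Import structures.
From mathcomp Require Import all_boot all_order all_algebra.
From mathcomp Require Import boolp classical_sets reals.
From mathcomp Require Import sequences exp.
From mathcomp Require Import ring lra.
Import Order.TTheory GRing.Theory Num.Theory.
Local Open Scope ring_scope.

(* Take [lam = t / (2 (1 + |v|)^2)].  While the counter is positive,
   [exp (- lam (i + v_q))] is a supermartingale along the run from [q(i)]: a
   step changes [i + v_q] by an increment of mean [t] (this is the potential
   equation) and modulus at most [1 + |v|], and [exp x <= 1 + x + 2 x^2] for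
   [x <= 1/2].  The process is at least 1 once the counter is 0, so every
   finite-horizon probability of reaching 0 from [p(1)] is at most
   [exp (- lam (1 + v_p - v_max)) = exp (- lam)].  Hence
   [[p up] >= 1 - exp (- lam) >= lam / (1 + lam)], which [t <= 1] turns into
   the cubic bound. *)

Lemma expR_le_quadratic {R : realType} (x : R) :
  x <= 1/2 -> expR x <= 1 + x + 2 * x ^+ 2.
Proof.
move=> x_le.
have xexp_le1 : (1 - x) * expR x <= 1.
  have := ler_wpM2r (expR_ge0 x) (expR_ge1Dx (- x)).
  by rewrite expRN mulVf ?gt_eqF ?expR_gt0 // addrC.
have quad_ge1 : 1 <= (1 - x) * (1 + x + 2 * x ^+ 2).
  have : 0 <= x ^+ 2 * (1 - 2 * x) by rewrite mulr_ge0 ?sqr_ge0 //; lra.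
  nra.
have := expR_gt0 x; nra.
Qed.

Lemma expR_Nmul_le_quadratic {R : realType} (lam N D : R) :
  0 <= lam -> lam * N <= 1/2 -> `|D| <= N ->
  expR (- lam * D) <= 1 + 2 * lam ^+ 2 * N ^+ 2 + (- lam) * D.
Proof.
move=> lam_ge0 lamN_le /ler_normlP[DN_ge ND_ge].
have x_le : - lam * D <= 1/2 by nra.
have ND_ge0 : 0 <= N - D by lra.
have DN_ge0 : 0 <= N + D by lra.
have DN2_ge0 := mulr_ge0 (sqr_ge0 lam) (mulr_ge0 ND_ge0 DN_ge0).
by apply: (le_trans (expR_le_quadratic _ x_le)); nra.
Qed.

Lemma ratio_le_onem_expRN {R : realType} (x : R) :
  0 <= x -> x / (1 + x) <= 1 - expR (- x).
Proof.
move=> x_ge0; have Dx_gt0 : 0 < 1 + x by lra.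
have : expR (- x) * (1 + x) <= 1.
  have := ler_wpM2l (expR_ge0 (- x)) (expR_ge1Dx x).
  by rewrite -expRD addNr expR0.
rewrite ler_pdivrMr //; lra.
Qed.

Lemma cube_div_le_ratio {R : realType} {t M lam : R} : 0 < t <= 1 -> 0 <= M ->
  lam = t / (2 * (1 + M) ^+ 2) ->
  t ^+ 3 / (12 * (2 * M + 4) ^+ 3) <= lam / (1 + lam).
Proof.
move=> /andP[t_gt0 t_le1] M_ge0 lam_def.
have N2_gt0 : 0 < 2 * (1 + M) ^+ 2 by nra.
have lam_gt0 : 0 < lam by rewrite lam_def divr_gt0.
have lamE : lam * (2 * (1 + M) ^+ 2) = t by rewrite lam_def divfK ?gt_eqF.
have lam_le : lam <= 1/2 by nra.
have K_gt0 : 0 < 12 * (2 * M + 4) ^+ 3 by rewrite mulr_gt0 ?exprn_gt0 //; lra.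
rewrite ler_pdivrMr // mulrAC ler_pdivlMr; last lra.
have N2_le : (1 + M) ^+ 2 <= (2 * M + 4) ^+ 3.
  have : (1 + M) ^+ 2 <= (2 * M + 4) ^+ 2 by rewrite ler_sqr ?nnegrE; lra.
  have := sqr_ge0 (2 * M + 4); rewrite exprS; nra.
have : t ^+ 3 <= t by nra.
nra.
Qed.

Lemma normr_upd (R : realDomainType) (k : 'I_3) : `|(upd k)%:~R : R| <= 1.
Proof. by case: k => [[|[|[|//]]] ?]; rewrite /upd /= ?normrN ?normr1 ?normr0. Qed.

Section ExponentialBound.
Context {R : realType} {Q : finType} (A : pOC R Q).

Lemma sdrift_le1 q : sdrift A q <= 1.
Proof.
rewrite /sdrift -[leRHS](Ppos_sum1 A q); apply: ler_sum => k _; apply: ler_sum => q' _.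
rewrite -[leRHS]mulr1 ler_wpM2l ?Ppos_ge0 //.
exact: le_trans (ler_norm _) (normr_upd R k).
Qed.

Lemma trend_le1 {alpha} : invariant_distribution A alpha -> trend A alpha <= 1.
Proof.
move=> [alpha_ge0 [alpha_sum1 _]]; rewrite /trend -alpha_sum1.
by apply: ler_sum => q _; rewrite -[leRHS]mulr1 ler_wpM2l ?sdrift_le1.
Qed.

Lemma sum_Ppos_affine q (a b : R) (f : 'I_3 -> Q -> R) :
  \sum_k \sum_q' Ppos A q k q' * (a + b * f k q') =
  a + b * \sum_k \sum_q' Ppos A q k q' * f k q'.
Proof.
under eq_bigr => k _ do under eq_bigr => q' _ do rewrite mulrDr mulrCA.
under eq_bigr => k _ do rewrite big_split /= -mulr_suml -mulr_sumr.
by rewrite big_split /= -mulr_suml -mulr_sumr Ppos_sum1 mul1r.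
Qed.

Definition increment (v : Q -> R) q k q' : R := (upd k)%:~R + v q' - v q.

Lemma mean_increment {t v} q : potential A t v ->
  \sum_k \sum_q' Ppos A q k q' * increment v q k q' = t.
Proof.
move=> potv.
have incrE k q' : increment v q k q' = - v q + 1 * ((upd k)%:~R + v q').
  by rewrite /increment mul1r addrC.
under eq_bigr => k _ do under eq_bigr => q' _ do rewrite incrE.
rewrite sum_Ppos_affine mul1r.
have -> : \sum_k \sum_q' Ppos A q k q' * ((upd k)%:~R + v q') =
    sdrift A q + \sum_q' Amat A q q' * v q'.
  under eq_bigr => k _ do rewrite (eq_bigr _ (fun q' _ => mulrDr _ _ _)) big_split.
  rewrite big_split /=; congr (_ + _); rewrite exchange_big /=.
  by apply: eq_bigr => q' _; rewrite mulr_suml.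
by rewrite potv addKr.
Qed.

Lemma normr_increment_le {v} {lo hi : R} :
  (forall q, lo <= v q) -> (forall q, v q <= hi) ->
  forall q k q', `|increment v q k q'| <= 1 + (hi - lo).
Proof.
move=> lo_le le_hi q k q'; have := normr_upd R k.
have := lo_le q; have := lo_le q'; have := le_hi q; have := le_hi q'.
rewrite !ler_norml /increment; lra.
Qed.

Definition exp_supermartingale (lam : R) (v : Q -> R) : Prop :=
  forall q, \sum_k \sum_q' Ppos A q k q' * expR (- lam * increment v q k q') <= 1.

Lemma exp_supermartingale_of_potential {t v} {lam N : R} :
  potential A t v -> 0 <= lam -> lam * N <= 1/2 -> 2 * lam * N ^+ 2 <= t ->
  (forall q k q', `|increment v q k q'| <= N) -> exp_supermartingale lam v.
Proof.
move=> potv lam_ge0 lamN_le lamN2_le incr_le q.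
pose c := 2 * lam ^+ 2 * N ^+ 2.
apply: (@le_trans _ _ (\sum_k \sum_q' Ppos A q k q' *
    (1 + c + (- lam) * increment v q k q'))).
  apply: ler_sum => k _; apply: ler_sum => q' _.
  by rewrite ler_wpM2l ?Ppos_ge0 //; exact: expR_Nmul_le_quadratic.
rewrite sum_Ppos_affine (mean_increment q potv) /c; nra.
Qed.

Lemma hit_le_expR {lam v} {m : R} : exp_supermartingale lam v -> 0 <= lam ->
  (forall q, v q <= m) ->
  forall n q i, hit A n q i <= expR (- lam * (i%:R + v q - m)).
Proof.
move=> super lam_ge0 v_le.
have at0 q : 1 <= expR (- lam * (0%:R + v q - m)).
  rewrite -expR0 ler_expR add0r mulNr -mulrN opprB.
  by rewrite mulr_ge0 // subr_ge0.
elim=> [|n IH] q [|i] /=; rewrite ?at0 ?expR_ge0 //.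
set f := expR _.
have step (k : 'I_3) q' : expR (- lam * ((i.+1 + k - 1)%N%:R + v q' - m)) =
    f * expR (- lam * increment v q k q').
  rewrite -expRD -mulrDr /increment subn1 addSn /= natrD mulrSr /upd.
  by rewrite rmorphB /=; congr (expR (_ * _)); lra.
apply: (@le_trans _ _ (f * \sum_k \sum_q' Ppos A q k q' *
    expR (- lam * increment v q k q'))).
  rewrite mulr_sumr; apply: ler_sum => k _.
  rewrite mulr_sumr; apply: ler_sum => q' _.
  by rewrite mulrCA -step ler_wpM2l ?Ppos_ge0.
by rewrite -[leRHS]mulr1 ler_wpM2l ?expR_ge0.
Qed.

Lemma pdown_le_expR {lam v} {m : R} : exp_supermartingale lam v -> 0 <= lam ->
  (forall q, v q <= m) -> forall q, pdown A q <= expR (- lam * (1 + v q - m)).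
Proof.
move=> super lam_ge0 v_le q; apply: ge_sup; first by exists (hit A 0 q 1), 0%N.
by move=> _ [n _ <-]; exact: hit_le_expR.
Qed.
End ExponentialBound.

Theorem mainTheorem16 (R : realType) (Q : finType) (A : pOC R Q)
  (alpha : Q -> R) (v : Q -> R) (p : Q) :
  strongly_connected A ->
  invariant_distribution A alpha ->
  0 < trend A alpha ->
  (forall q, 0 < pdown A q) ->
  potential A (trend A alpha) v ->
  v p = vmax p v ->
  pup A p >= (trend A alpha) ^+ 3 /
              (12 * (2 * (vmax p v - vmin p v) + 4) ^+ 3).
Proof.
move=> _ alphaP t_gt0 _ potv vp_max.
have t_le1 := trend_le1 A alphaP.
set t := trend A alpha in t_gt0 t_le1 potv *.
have v_le q : v q <= vmax p v by rewrite /vmax; exact: le_bigmax.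
have v_ge q : vmin p v <= v q by rewrite /vmin; exact: bigmin_le.
set M := vmax p v - vmin p v.
have M_ge0 : 0 <= M by have := v_le p; have := v_ge p; rewrite /M; lra.
pose lam := t / (2 * (1 + M) ^+ 2).
have lamE : 2 * lam * (1 + M) ^+ 2 = t.
  rewrite /lam; field; rewrite paddr_eq0 ?oner_eq0 //; lra.
have lam_ge0 : 0 <= lam by rewrite divr_ge0 ?ltW //; nra.
have super : exp_supermartingale A lam v.
  have lamN_le : lam * (1 + M) <= 1/2.
    have := mulr_ge0 (mulr_ge0 lam_ge0 (addr_ge0 ler01 M_ge0)) M_ge0; nra.
  apply: (exp_supermartingale_of_potential A potv lam_ge0 lamN_le _
           (normr_increment_le v_ge v_le)).
  by rewrite lamE.
have pdown_le : pdown A p <= expR (- lam).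
  by have := pdown_le_expR A super lam_ge0 v_le p; rewrite vp_max addrK mulr1.
have t_bounds : 0 < t <= 1 by rewrite t_gt0.
apply: le_trans (cube_div_le_ratio t_bounds M_ge0 (erefl lam)) _.
exact: le_trans (ratio_le_onem_expRN _ lam_ge0) (lerB (lexx 1) pdown_le).
Qed.
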